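(* Let $\mathcal{W}$ and $\mathcal{V}$ be compact and let the stage cost be $l(x,w;(u,y))=|w|_Q^2+|y-h(x,u)|_R^2$ with $Q,R\succ0$. Then there exists $A>0$ such that $J_{[t_1,t_2]}(z^\infty_{t_1:t_2})\leq A(t_2-t_1)$ for all integers $t_1\le t_2$ and every possible data sequence $d_{-\infty:\infty}$.
   Context: System: $x_{t+1}=f(x_t,u_t,w_t)$, $y_t=h(x_t,u_t)+v_t$ with $x_t\in\mathbb{R}^n,u_t\in\mathbb{R}^m,w_t\in\mathbb{R}^q,v_t\in\mathbb{R}^p$, $f,h$ continuous; known sets $\mathcal{X},\mathcal{U},\mathcal{W}\ni0,\mathcal{V}$ with $f(\mathcal{X}\times\mathcal{U}\times\mathcal{W})\subseteq\mathcal{X}$. Data $d_t=(u_t,y_t)$; a possible data sequence $(d_t)_{t\in\mathbb{Z}}$ is one generated by the system for all $t\in\mathbb{Z}$ by a trajectory with $(x_t,u_t,w_t,v_t)\in\mathcal{X}\times\mathcal{U}\times\mathcal{W}\times\mathcal{V}$. The infinite-horizon problem $P_\infty(d_{-\infty:\infty})$ minimizes $\sum_{j\in\mathbb{Z}}l(\hat x_j,\hat w_j;d_j)$ over bi-infinite sequences subject to $\hat x_{j+1}=f(\hat x_j,u_j,\hat w_j)$, $\hat x_j\in\mathcal{X}$, $\hat w_j\in\mathcal{W}$, $y_j-h(\hat x_j,u_j)\in\mathcal{V}$ for all $j\in\mathbb{Z}$; its solution is assumed to exist uniquely and is denoted $z^\infty_j=(x^\infty_j,w^\infty_j)$. Performance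 criterion: $J_{[t_1,t_2]}(\hat z_{t_1:t_2})=\sum_{j=t_1}^{t_2-1}l(\hat z_j;d_j)$. *)

From HB Require Import structures.
From mathcomp Require Import all_boot all_order all_algebra.
From mathcomp Require Import all_classical all_reals all_analysis.
Set Implicit Arguments. Unset Strict Implicit. Unset Printing Implicit Defensive.
Import Order.TTheory GRing.Theory Num.Theory.
Import numFieldNormedType.Exports.
Local Open Scope classical_set_scope.
Local Open Scope ring_scope.

Definition qnorm2 (R : realType) (k : nat) (Q : 'M[R]_k) (w : 'cV[R]_k) : R :=
  (w^T *m Q *m w) ord0 ord0.

Definition posdef (R : realType) (k : nat) (Q : 'M[R]_k) : Prop :=
  Q^T = Q /\ forall w : 'cV[R]_k, w != 0 -> 0 < qnorm2 Q w.

Section Sys.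
Variables (R : realType) (n m q p : nat).
Variables (f : 'cV[R]_n -> 'cV[R]_m -> 'cV[R]_q -> 'cV[R]_n)
          (h : 'cV[R]_n -> 'cV[R]_m -> 'cV[R]_p).
Variables (X : set 'cV[R]_n) (U : set 'cV[R]_m) (W : set 'cV[R]_q) (V : set 'cV[R]_p).

(* data d_t = (u_t, y_t); estimates z_t = (xhat_t, what_t) *)
Definition possible_data (d : int -> 'cV[R]_m * 'cV[R]_p) : Prop :=
  exists (x : int -> 'cV[R]_n) (w : int -> 'cV[R]_q) (v : int -> 'cV[R]_p),
    forall t : int,
      [/\ X (x t), U (d t).1, W (w t), V (v t) &
          x (t + 1) = f (x t) (d t).1 (w t) /\
          (d t).2 = h (x t) (d t).1 + v t].

Definition feasible (d : int -> 'cV[R]_m * 'cV[R]_p)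
    (z : int -> 'cV[R]_n * 'cV[R]_q) : Prop :=
  forall j : int,
    [/\ (z (j + 1)).1 = f (z j).1 (d j).1 (z j).2,
        X (z j).1, W (z j).2 & V ((d j).2 - h (z j).1 (d j).1)].

Variables (Q : 'M[R]_q) (Rw : 'M[R]_p).

Definition stage_cost (z : 'cV[R]_n * 'cV[R]_q) (dj : 'cV[R]_m * 'cV[R]_p) : R :=
  qnorm2 Q z.2 + qnorm2 Rw (dj.2 - h z.1 dj.1).

Definition inf_cost (d : int -> 'cV[R]_m * 'cV[R]_p)
    (z : int -> 'cV[R]_n * 'cV[R]_q) : \bar R :=
  (\esum_(j in [set: int]) (stage_cost (z j) (d j))%:E)%E.

Definition unique_solution (d : int -> 'cV[R]_m * 'cV[R]_p)
    (z : int -> 'cV[R]_n * 'cV[R]_q) : Prop :=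
  [/\ feasible d z,
      (forall z', feasible d z' -> (inf_cost d z <= inf_cost d z')%E) &
      (forall z', feasible d z' ->
          (forall z'', feasible d z'' -> (inf_cost d z' <= inf_cost d z'')%E) ->
          z' = z)].

Definition Jcost (t1 t2 : int) (d : int -> 'cV[R]_m * 'cV[R]_p)
    (z : int -> 'cV[R]_n * 'cV[R]_q) : R :=
  \sum_(0 <= k < `|t2 - t1|%N) stage_cost (z (t1 + k%:Z)) (d (t1 + k%:Z)).

End Sys.

From HB Require Import structures.
From mathcomp Require Import all_boot all_order all_algebra.
From mathcomp Require Import all_classical all_reals all_analysis.
Import Order.TTheory GRing.Theory Num.Theory.
Import numFieldNormedType.Exports.
Local Open Scope classical_set_scope.
Local Open Scope ring_scope.

(* Only boundedness is at stake: along any feasible estimate, w_j lies in W and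
   the residual y_j - h(x_j, u_j) lies in V, so by compactness every stage cost
   is bounded by a constant independent of j and of the data, and J over
   [t1, t2] is a sum of t2 - t1 stage costs. *)

Lemma mx_entry_norm_le (R : realDomainType) k l (w : 'M[R]_(k, l)) i j :
  `|w i j| <= `|w|.
Proof.
change (`|w i j| <= mx_norm w); rewrite mx_normrE.
exact: (le_bigmax _ _ (i, j)).
Qed.

Lemma qnorm2_le_norm (R : realType) k (Q : 'M[R]_k) (w : 'cV[R]_k) :
  qnorm2 Q w <= (\sum_j \sum_i `|Q i j|) * `|w| ^+ 2.
Proof.
have w_entry i : `|w i ord0| <= `|w| by exact: mx_entry_norm_le.
rewrite /qnorm2 mxE mulr_suml; apply: le_trans (ler_norm _) _.
apply: le_trans (ler_norm_sum _ _ _) _; apply: ler_sum => j _.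
rewrite mxE normrM mulr_suml.
apply: le_trans (ler_wpM2r (normr_ge0 _) (ler_norm_sum _ _ _)) _.
rewrite mulr_suml; apply: ler_sum => i _.
rewrite !mxE normrM [_ * `|Q i j|]mulrC -mulrA expr2.
by apply: ler_wpM2l => //; apply: ler_pM.
Qed.

Lemma qnorm2_bounded_on_compact (R : realType) k (Q : 'M[R]_k)
    (A : set 'cV[R]_k) :
  compact A -> exists2 B : R, 0 <= B & forall w, A w -> qnorm2 Q w <= B.
Proof.
move=> /compact_bounded /pinfty_ex_gt0 [M M0 AM].
have sumQ_ge0 : 0 <= \sum_j \sum_i `|Q i j|.
  by apply: sumr_ge0 => j _; apply: sumr_ge0.
exists ((\sum_j \sum_i `|Q i j|) * M ^+ 2).
  exact: mulr_ge0 sumQ_ge0 (exprn_ge0 _ (ltW M0)).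
move=> w Aw; apply: le_trans (@qnorm2_le_norm _ _ Q w) _.
by rewrite ler_wpM2l // lerXn2r ?nnegrE ?(ltW M0) // AM.
Qed.

Lemma Jcost_le_length (R : realType) n m q p
    (h : 'cV[R]_n -> 'cV[R]_m -> 'cV[R]_p) (Q : 'M[R]_q) (Rw : 'M[R]_p)
    (d : int -> 'cV[R]_m * 'cV[R]_p) (z : int -> 'cV[R]_n * 'cV[R]_q)
    (B : R) (t1 t2 : int) :
  (forall j, stage_cost h Q Rw (z j) (d j) <= B) -> t1 <= t2 ->
  Jcost h Q Rw t1 t2 d z <= B * (t2 - t1)%:~R.
Proof.
move=> stageB t12.
have -> : t2 - t1 = (`|t2 - t1|%N)%:Z by rewrite abszE ger0_norm // subr_ge0.
rewrite -pmulrn /Jcost mulr_natr -[X in _ *+ X]subn0 -sumr_const_nat.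
by apply: ler_sum => k _; apply: stageB.
Qed.

Theorem lemma1 (R : realType) (n m q p : nat)
    (f : 'cV[R]_n -> 'cV[R]_m -> 'cV[R]_q -> 'cV[R]_n)
    (h : 'cV[R]_n -> 'cV[R]_m -> 'cV[R]_p)
    (X : set 'cV[R]_n) (U : set 'cV[R]_m) (W : set 'cV[R]_q) (V : set 'cV[R]_p)
    (Q : 'M[R]_q) (Rw : 'M[R]_p)
    (zinf : (int -> 'cV[R]_m * 'cV[R]_p) -> int -> 'cV[R]_n * 'cV[R]_q) :
  continuous (fun xuw : 'cV[R]_n * 'cV[R]_m * 'cV[R]_q => f xuw.1.1 xuw.1.2 xuw.2) ->
  continuous (fun xu : 'cV[R]_n * 'cV[R]_m => h xu.1 xu.2) ->
  W 0 ->
  (forall x u w, X x -> U u -> W w -> X (f x u w)) ->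
  compact W -> compact V ->
  posdef Q -> posdef Rw ->
  (forall d, possible_data f h X U W V d ->
     unique_solution f h X W V Q Rw d (zinf d)) ->
  exists A : R, 0 < A /\
    forall d, possible_data f h X U W V d ->
    forall t1 t2 : int, t1 <= t2 ->
      Jcost h Q Rw t1 t2 d (zinf d) <= A * (t2 - t1)%:~R.
Proof.
move=> _ _ _ _ cW cV _ _ zinf_opt.
have [BW BW0 WB] := @qnorm2_bounded_on_compact _ _ Q _ cW.
have [BV BV0 VB] := @qnorm2_bounded_on_compact _ _ Rw _ cV.
exists (BW + BV + 1); split; first exact: ltr_wpDl (addr_ge0 BW0 BV0) ltr01.
move=> d dP t1 t2; apply: Jcost_le_length => j.
have [zinf_feas _ _] := zinf_opt d dP.
have [_ _ Wwj Vvj] := zinf_feas j.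
apply: le_trans (_ : BW + BV <= _); last by rewrite lerDl.
by apply: lerD; [exact: WB | exact: VB].
Qed.
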